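(* Let $A$ be a Banach algebra with a central bounded approximate identity. Then every approximately semi-inner derivation from $A$ into a Banach $A$-bimodule is approximately inner. In particular, this holds when $A$ is unital.
   Context: For a Banach algebra $A$ and a Banach $A$-bimodule $X$, a derivation is a linear map $D:A\to X$ with $D(ab)=a\cdot D(b)+D(a)\cdot b$. A continuous derivation $D:A\to X$ is approximately semi-inner if there are nets $(\xi_i),(\eta_i)$ in $X$ (over the same directed set) with $D(a)=\lim_i(a\cdot\xi_i-\eta_i\cdot a)$ in norm for every $a\in A$; it is approximately inner if there is a net $(\xi_i)$ in $X$ with $D(a)=\lim_i(a\cdot\xi_i-\xi_i\cdot a)$ in norm for every $a\in A$. A central bounded approximate identity is a bounded net $(e_\alpha)$ of elements of the centre of $A$ with $e_\alpha a\to a$ for all $a\in A$. *)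

From HB Require Import structures.
From mathcomp Require Import all_boot all_order all_algebra.
From mathcomp Require Import all_classical all_reals all_analysis.
Set Implicit Arguments. Unset Strict Implicit. Unset Printing Implicit Defensive.
Import Order.TTheory GRing.Theory Num.Theory.
Import numFieldNormedType.Exports.
Local Open Scope ring_scope.

Definition directed_set (I : Type) (le : I -> I -> Prop) : Prop :=
  (inhabited I /\ (forall i, le i i) /\ (forall i j k, le i j -> le j k -> le i k) /\ (forall i j, exists k, le i k /\ le j k)).

Definition net_cvg (K : numFieldType) (V : normedModType K)
  (I : Type) (le : I -> I -> Prop) (x : I -> V) (l : V) : Prop :=
  forall eps : K, 0 < eps ->
    exists i0 : I, forall i, le i0 i -> `|x i - l| < eps.

Definition banach_algebra (K : numFieldType) (A : completeNormedModType K)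
  (mul : A -> A -> A) : Prop :=
  ((forall a b c, mul a (mul b c) = mul (mul a b) c) /\ (forall a b c, mul (a + b) c = mul a c + mul b c) /\ (forall a b c, mul a (b + c) = mul a b + mul a c) /\ (forall (k : K) a b, mul (k *: a) b = k *: mul a b) /\ (forall (k : K) a b, mul a (k *: b) = k *: mul a b) /\ (forall a b, `|mul a b| <= `|a| * `|b|)).

Definition banach_bimodule (K : numFieldType) (A : completeNormedModType K)
  (mul : A -> A -> A) (X : completeNormedModType K)
  (lact : A -> X -> X) (ract : X -> A -> X) : Prop :=
  ((forall a b x, lact a (lact b x) = lact (mul a b) x) /\ (forall x a b, ract (ract x a) b = ract x (mul a b)) /\ (forall a x b, ract (lact a x) b = lact a (ract x b)) /\ (forall a b x, lact (a + b) x = lact a x + lact b x) /\ (forall a x y, lact a (x + y) = lact a x + lact a y) /\ (forall x a b, ract x (a + b) = ract x a + ract x b) /\ (forall x y a, ract (x + y) a = ract x a + ract y a) /\ (forall (k : K) a x, lact (k *: a) x = k *: lact a x /\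
                           lact a (k *: x) = k *: lact a x) /\ (forall (k : K) x a, ract x (k *: a) = k *: ract x a /\
                           ract (k *: x) a = k *: ract x a) /\ (exists C : K, 0 < C /\ forall a x,
         `|lact a x| <= C * `|a| * `|x| /\ `|ract x a| <= C * `|a| * `|x|)).

Definition derivation (K : numFieldType) (A : completeNormedModType K)
  (mul : A -> A -> A) (X : completeNormedModType K)
  (lact : A -> X -> X) (ract : X -> A -> X) (D : A -> X) : Prop :=
  ((forall a b, D (a + b) = D a + D b) /\ (forall (k : K) a, D (k *: a) = k *: D a) /\ (forall a b, D (mul a b) = lact a (D b) + ract (D a) b)).

Definition approx_semi_inner (K : numFieldType) (A : completeNormedModType K)
  (X : completeNormedModType K)
  (lact : A -> X -> X) (ract : X -> A -> X) (D : A -> X) : Prop :=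
  exists (I : Type) (le : I -> I -> Prop) (xi eta : I -> X),
    directed_set le /\
    forall a : A, net_cvg le (fun i => lact a (xi i) - ract (eta i) a) (D a).

Definition approx_inner (K : numFieldType) (A : completeNormedModType K)
  (X : completeNormedModType K)
  (lact : A -> X -> X) (ract : X -> A -> X) (D : A -> X) : Prop :=
  exists (I : Type) (le : I -> I -> Prop) (xi : I -> X),
    directed_set le /\
    forall a : A, net_cvg le (fun i => lact a (xi i) - ract (xi i) a) (D a).

Definition has_central_bai (K : numFieldType) (A : completeNormedModType K)
  (mul : A -> A -> A) : Prop :=
  exists (I : Type) (le : I -> I -> Prop) (e : I -> A),
    (directed_set le /\ (forall i a, mul (e i) a = mul a (e i)) /\ (exists M : K, forall i, `|e i| <= M) /\ (forall a, net_cvg le (fun i => mul (e i) a) a)).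

Definition unital (K : numFieldType) (A : completeNormedModType K)
  (mul : A -> A -> A) : Prop :=
  exists u : A, forall a, mul u a = a /\ mul a u = a.

(* Let D a = lim_i (a xi_i - eta_i a), and for a central c put
   T_c d = c d + d c - c d c.  With zeta_i = c (xi_i - eta_i) + T_c eta_i, the
   difference between a zeta_i - zeta_i a and T_c (a xi_i - eta_i a) consists
   of terms u (xi_i - eta_i) v, which are exactly the Leibniz defects of the
   approximants a |-> a xi_i - eta_i a; they tend to the defect of D, i.e.
   to 0.  So T_c o D is approximately inner.  For a central bounded
   approximate identity (e_j), with w = a - e_j a,
     D a - T_(e_j) (D a) = (1 - e_j) (D a) (1 - e_j) = D w - (D w) e_j + (D e_j) w,
   which tends to 0 since w -> 0 while e_j and D e_j stay bounded.  Finally,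
   a pointwise limit of approximately inner maps is approximately inner: the
   required net is indexed by pairs (finite subset of A, tolerance). *)

From HB Require Import structures.
From mathcomp Require Import all_boot all_order all_algebra.
From mathcomp Require Import all_classical all_reals all_analysis.
Import numFieldNormedType.Exports.
Import Order.TTheory GRing.Theory Num.Theory.
Local Open Scope classical_set_scope.
Local Open Scope ring_scope.
Set Implicit Arguments.
Unset Strict Implicit.

Section Nets.
Variables (I : Type) (le : I -> I -> Prop).

Definition net_filter : set_system I :=
  filter_from setT (fun i0 => [set i | le i0 i]).

Lemma net_filter_proper : directed_set le -> ProperFilter net_filter.
Proof.
move=> [[i0] [refl [trans upper]]].
apply: filter_from_proper => [|i _]; last by exists i; exact: refl.
apply: filter_fromT_filter => [|i j]; first by exists i0.
have [k [ik jk]] := upper i j.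
by exists k => l kl; split; [exact: trans ik kl | exact: trans jk kl].
Qed.

Lemma net_cvgP (K : numFieldType) (V : normedModType K) (x : I -> V) (l : V) :
  directed_set le -> net_cvg le x l <-> x @ net_filter --> l.
Proof.
move=> /net_filter_proper FF; rewrite cvgrPdistC_lt.
split=> x_l eps /x_l; first by move=> [i0 x_i0]; exists i0.
by move=> [i0 _ x_i0]; exists i0.
Qed.

End Nets.

Section NormedModules.
Variable K : numFieldType.
Implicit Types V W : normedModType K.

Lemma morphB (U V : zmodType) (f : U -> V) :
  {morph f : x y / x + y} -> {morph f : x y / x - y}.
Proof. by move=> fD x y; rewrite -[in RHS](subrK y x) [in RHS]fD addrK. Qed.

Lemma cvg0_dominated T (F : set_system T) {FF : Filter F} V W
    (x : T -> V) (y : T -> W) (c : K) :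
  0 <= c -> (forall t, `|y t| <= c * `|x t|) -> x @ F --> 0 -> y @ F --> 0.
Proof.
move=> c0 yx /cvgr0Pnorm_lt x0; apply/cvgr0Pnorm_lt => eps eps0.
have c1 : 0 < c + 1 by rewrite ltr_wpDl.
near=> t; apply: le_lt_trans (yx t) _.
apply: (@le_lt_trans _ _ ((c + 1) * `|x t|)); first by rewrite ler_wpM2r // lerDl.
rewrite -(divfK (lt0r_neq0 c1) eps) mulrC ltr_pM2r //.
by near: t; exact: x0 (divr_gt0 eps0 c1).
Unshelve. all: by end_near. Qed.

Lemma bounded_additive_continuous V W (f : V -> W) (c : K) :
  {morph f : u v / u + v} -> 0 <= c -> (forall v, `|f v| <= c * `|v|) ->
  continuous f.
Proof.
move=> fD c0 fc v; apply/subr_cvg0.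
apply: (@cvg0_dominated _ _ _ _ _ (fun u => u - v) _ c c0).
  by move=> u; rewrite -(morphB fD).
exact/subr_cvg0.
Qed.

Lemma continuous_linear_normr_le V W (f : V -> W) :
  {morph f : u v / u + v} -> (forall (k : K) v, f (k *: v) = k *: f v) ->
  continuous f -> exists2 r : K, 0 < r & forall v, `|f v| <= r * `|v|.
Proof.
move=> fD fZ fc.
have f_linear : linear f by move=> k u v; rewrite fD fZ.
pose g : {linear V -> W} := HB.pack f (GRing.isLinear.Build K V W *:%R f f_linear).
by have /linear_bounded_continuous /linear_boundedP /pinfty_ex_gt0 := fc : continuous g.
Qed.

Lemma near_all_in T (F : set_system T) {FF : Filter F} (J : eqType)
    (P : J -> T -> Prop) (s : seq J) :
  (forall a, a \in s -> \forall t \near F, P a t) ->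
  \forall t \near F, forall a, a \in s -> P a t.
Proof.
elim: s => [|b s IHs] Ps; first exact: nearW.
have Pb := Ps b (mem_head _ _).
have Ps' := IHs (fun a sa => Ps a (mem_behead (s := b :: s) sa)).
apply: filterS2 Pb Ps' => t Pbt Pst a /predU1P [->|]; [exact: Pbt | exact: Pst].
Qed.

End NormedModules.

Section ApproximateInnerness.
Variables (K : numFieldType) (A X : completeNormedModType K).
Variables (lact : A -> X -> X) (ract : X -> A -> X).

Definition ad (z : X) (a : A) : X := lact a z - ract z a.

Definition fin_approx_inner (D : A -> X) : Prop :=
  forall (s : seq A) (eps : {posnum K}),
    exists z : X, forall a, a \in s -> `|ad z a - D a| < eps%:num.

Lemma fin_approx_inner_ad z : fin_approx_inner (ad z).
Proof. by move=> s eps; exists z => a _; rewrite subrr normr0. Qed.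

Lemma fin_approx_inner_lim J (G : set_system J) {PG : ProperFilter G}
    (Dj : J -> A -> X) (D : A -> X) :
  (forall j, fin_approx_inner (Dj j)) -> (forall a, Dj ^~ a @ G --> D a) ->
  fin_approx_inner D.
Proof.
move=> Dj_inner Dj_D s eps.
have /filter_ex [j Dj_near] :
    \forall j \near G, forall a, a \in s -> `|Dj j a - D a| < eps%:num / 2.
  by apply: near_all_in => a _; apply: (cvgrPdistC_lt _ _).1 (Dj_D a) _ _.
have [z z_Dj] := Dj_inner j s (eps%:num / 2)%:pos.
exists z => a sa; rewrite [eps%:num]splitr -[ad z a](subrK (Dj j a)) -addrA.
exact: le_lt_trans (ler_normD _ _) (ltrD (z_Dj a sa) (Dj_near a sa)).
Qed.

Lemma approx_inner_of_fin D : fin_approx_inner D -> approx_inner lact ract D.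
Proof.
move=> D_inner.
pose le (p q : seq A * {posnum K}) :=
  {subset p.1 <= q.1} /\ q.2%:num <= p.2%:num.
have [z z_D] := choice (fun p : seq A * {posnum K} => D_inner p.1 p.2).
exists _, le, z; split.
  split; first exact: (inhabits ([::], 1%:pos)).
  split; first by move=> p; split.
  split=> [p q r [pq qp] [qr rq]|p q].
    by split; [move=> a /pq /qr | exact: le_trans rq qp].
  exists (p.1 ++ q.1, (Num.min p.2%:num q.2%:num)%:pos).
  by split; split=> [a aq|/=]; rewrite ?mem_cat ?aq ?orbT ?num_ge_min ?lexx ?orbT.
move=> a _ /posnumP[eps]; exists ([:: a], eps) => q [aq qe].
exact: lt_le_trans (z_D q a (aq a (mem_head _ _))) qe.
Qed.

End ApproximateInnerness.

Section CentralCompression.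
Variables (K : numFieldType) (A : completeNormedModType K) (mul : A -> A -> A).
Variables (X : completeNormedModType K) (lact : A -> X -> X) (ract : X -> A -> X).
Hypothesis bimod : banach_bimodule mul lact ract.

Let lactA a b x : lact a (lact b x) = lact (mul a b) x.
Proof. by case: bimod => h _; exact: h. Qed.
Let ractA x a b : ract (ract x a) b = ract x (mul a b).
Proof. by case: bimod => _ [h _]; exact: h. Qed.
Let lractA a x b : ract (lact a x) b = lact a (ract x b).
Proof. by case: bimod => _ [_ [h _]]; exact: h. Qed.
Let lactDr a : {morph lact a : x y / x + y}.
Proof. by case: bimod => _ [_ [_ [_ [h _]]]]; exact: h. Qed.
Let ractDr x : {morph ract x : a b / a + b}.
Proof. by case: bimod => _ [_ [_ [_ [_ [h _]]]]]; exact: h. Qed.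
Let ractDl a x y : ract (x + y) a = ract x a + ract y a.
Proof. by case: bimod => _ [_ [_ [_ [_ [_ [h _]]]]]]; exact: h. Qed.
Let bimod_bound : exists2 C : K, 0 < C & forall a x,
  `|lact a x| <= C * `|a| * `|x| /\ `|ract x a| <= C * `|a| * `|x|.
Proof. by case: bimod => _ [_ [_ [_ [_ [_ [_ [_ [_ [C [C0 hC]]]]]]]]]]; exists C. Qed.

Let lactBr a : {morph lact a : x y / x - y} := morphB (lactDr a).
Let ractBr x : {morph ract x : a b / a - b} := morphB (ractDr x).
Let ractBl a x y : ract (x - y) a = ract x a - ract y a :=
  morphB (fun x y => ractDl a x y) x y.
Let lact0 a : lact a 0 = 0.
Proof. by rewrite -[in LHS](subrr 0) lactBr subrr. Qed.

Let adD z1 z2 a : ad lact ract (z1 + z2) a = ad lact ract z1 a + ad lact ract z2 a.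
Proof. by rewrite /ad lactDr ractDl opprD addrACA. Qed.

Let cvg_lact T (F : set_system T) {FF : Filter F} (u : T -> X) l a :
  u @ F --> l -> (fun t => lact a (u t)) @ F --> lact a l.
Proof.
move=> u_l; apply: (@continuous_cvg _ _ _ F _ u (lact a) l) u_l.
have [C C0 hC] := bimod_bound.
apply: (@bounded_additive_continuous _ _ _ _ (C * `|a|)) => // [|x].
  by rewrite mulr_ge0 // ltW.
exact: (hC a x).1.
Qed.

Let cvg_ract T (F : set_system T) {FF : Filter F} (u : T -> X) l a :
  u @ F --> l -> (fun t => ract (u t) a) @ F --> ract l a.
Proof.
move=> u_l; apply: (@continuous_cvg _ _ _ F _ u (ract^~ a) l) u_l.
have [C C0 hC] := bimod_bound.
apply: (@bounded_additive_continuous _ _ _ _ (C * `|a|)) => [x y||x].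
- exact: ractDl.
- by rewrite mulr_ge0 // ltW.
- exact: (hC a x).2.
Qed.

(* [compress c] is T_c; in the unitization, [compress c d = d - (1 - c) d (1 - c)]. *)
Definition compress (c : A) (d : X) : X :=
  lact c d + ract d c - lact c (ract d c).

Definition defect (Y : A -> X) (a b : A) : X :=
  lact a (Y b) + ract (Y a) b - Y (mul a b).

Lemma defect_ad_pair x y a b :
  defect (fun a => lact a x - ract y a) a b = lact a (ract (x - y) b).
Proof.
rewrite /defect !ractBl !lactBr lactA ractA lractA.
by rewrite opprB -addrA subrKA addrC subrKA.
Qed.

Lemma defect_derivation D a b : derivation mul lact ract D -> defect D a b = 0.
Proof. by case=> _ [_ Dmul]; rewrite /defect Dmul subrr. Qed.

Section CentralElement.
Variable c : A.
Hypothesis c_central : forall a, mul c a = mul a c.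

Let lactC a x : lact c (lact a x) = lact a (lact c x).
Proof. by rewrite !lactA c_central. Qed.
Let ractC a x : ract (ract x a) c = ract (ract x c) a.
Proof. by rewrite !ractA c_central. Qed.

Lemma compressD : {morph compress c : x y / x + y}.
Proof.
move=> x y; rewrite /compress lactDr ractDl lactDr opprD.
by rewrite (addrACA (lact c x)) (addrACA (lact c x + _)).
Qed.

Lemma compress_lact a x : compress c (lact a x) = lact a (compress c x).
Proof. by rewrite /compress lractA !lactC lactBr lactDr. Qed.

Lemma compress_ract a x : compress c (ract x a) = ract (compress c x) a.
Proof.
rewrite /compress ractC -lractA -[lact c (ract (ract x c) a)]lractA.
by rewrite ractBl ractDl.
Qed.

Lemma compress_ad y a :
  compress c (ad lact ract y a) = ad lact ract (compress c y) a.
Proof. by rewrite /ad (morphB compressD) compress_lact compress_ract. Qed.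

Lemma compress_ad_approx x y a (e := x - y) :
  compress c (lact a x - ract y a) - ad lact ract (lact c e + compress c y) a =
  lact c (ract e a) + (lact a (ract e c) - lact c (lact a (ract e c))).
Proof.
have -> : lact a x - ract y a = lact a e + ad lact ract y a.
  by rewrite /ad addrA -lactDr subrK.
rewrite compressD adD compress_ad (addrC (ad _ _ _ a)) addrKA.
rewrite /compress /ad lactC !lractA -(addrA (lact a (lact c e))).
by rewrite opprB addrAC subrKC.
Qed.

Let cvg_compress T (F : set_system T) {FF : Filter F} (u : T -> X) l :
  u @ F --> l -> (fun t => compress c (u t)) @ F --> compress c l.
Proof.
move=> u_l; apply: cvgB; first by apply: cvgD; [exact: cvg_lact | exact: cvg_ract].
by apply: cvg_lact; exact: cvg_ract.
Qed.

Lemma compress_fin_approx_inner D :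
  derivation mul lact ract D -> approx_semi_inner lact ract D ->
  fin_approx_inner lact ract (fun a => compress c (D a)).
Proof.
move=> D_der [I [le [xi [eta [dI Y_D]]]]].
have FF := net_filter_proper dI.
pose Y i a := lact a (xi i) - ract (eta i) a.
have {}Y_D a : Y ^~ a @ net_filter le --> D a := (net_cvgP _ _ dI).1 (Y_D a).
have defect0 a b : (fun i => defect (Y i) a b) @ net_filter le --> 0.
  rewrite -(defect_derivation a b D_der).
  by apply: cvgB; [apply: cvgD; [exact: cvg_lact | exact: cvg_ract] | exact: Y_D].
apply: (fin_approx_inner_lim (G := net_filter le)
  (Dj := fun i => ad lact ract (lact c (xi i - eta i) + compress c (eta i)))) => [i|a].
  exact: fin_approx_inner_ad.
have ad_approx i : ad lact ract (lact c (xi i - eta i) + compress c (eta i)) a =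
    compress c (Y i a) -
    (defect (Y i) c a + (defect (Y i) a c - lact c (defect (Y i) a c))).
  by rewrite !defect_ad_pair -compress_ad_approx subKr.
have approx_err : (fun i => defect (Y i) c a +
    (defect (Y i) a c - lact c (defect (Y i) a c))) @ net_filter le --> 0.
  suff -> : (0 : X) = 0 + (0 - lact c 0).
    by apply: cvgD; [|apply: cvgB; [|exact: cvg_lact]]; exact: defect0.
  by rewrite lact0 subr0 addr0.
rewrite (eq_cvg _ _ ad_approx) -[compress c (D a)]subr0.
exact: cvgB (cvg_compress (Y_D a)) approx_err.
Qed.

Lemma compress_derivation D a (w := a - mul c a) :
  derivation mul lact ract D ->
  D a - compress c (D a) = D w - ract (D w) c + ract (D c) w.
Proof.
move=> [D_add [_ Dmul]].
have left_unit : D a - lact c (D a) = D w + ract (D c) a.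
  by rewrite /w (morphB D_add) Dmul opprD addrA subrK.
have two_sided : D a - compress c (D a) =
    D a - lact c (D a) - ract (D a - lact c (D a)) c.
  by rewrite /compress ractBl lractA -addrA opprD addrA.
by rewrite two_sided left_unit ractDl ractA -c_central opprD addrACA -ractBr.
Qed.

End CentralElement.

Lemma compress_central_bai_cvg D J (le : J -> J -> Prop) (e : J -> A) (M : K) :
  derivation mul lact ract D -> continuous D -> directed_set le ->
  (forall j a, mul (e j) a = mul a (e j)) -> (forall j, `|e j| <= M) ->
  (forall a, net_cvg le (fun j => mul (e j) a) a) ->
  forall a, (fun j => compress (e j) (D a)) @ net_filter le --> D a.
Proof.
move=> D_der D_cont dJ e_central e_le_M e_unit a.
have FF := net_filter_proper dJ.
have [D_add [D_scale _]] := D_der.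
have [C C0 hC] := bimod_bound.
have [r r0 D_le] := continuous_linear_normr_le D_add D_scale D_cont.
have M0 : 0 <= M by case: dJ => [[j0] _]; exact: le_trans (normr_ge0 _) (e_le_M j0).
pose w j := a - mul (e j) a.
have w0 : w @ net_filter le --> 0.
  by rewrite -(subrr a); apply: cvgB (cvg_cst a) ((net_cvgP _ _ dJ).1 (e_unit a)).
have Dw0 : (fun j => D (w j)) @ net_filter le --> 0.
  have D0 : D 0 = 0 by have := morphB D_add 0 0; rewrite !subrr.
  by rewrite -D0; exact: (continuous_cvg _ (D_cont 0) w0).
apply/subr_cvg0; rewrite -oppr0.
under eq_cvg do rewrite -opprB compress_derivation //.
rewrite -(addr0 0); apply: cvgN; apply: cvgD.
  apply: (cvg0_dominated (c := 1 + C * M) _ _ Dw0) => [|j].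
    by rewrite addr_ge0 // mulr_ge0 // ltW.
  rewrite mulrDl mul1r; apply: le_trans (ler_normB _ _) _; rewrite lerD2l.
  apply: le_trans (hC _ _).2 _; apply: ler_wpM2r => //.
  by rewrite ler_pM2l.
apply: (cvg0_dominated (c := C * (r * M)) _ _ w0) => [|j].
  by rewrite !mulr_ge0 // ltW.
apply: le_trans (hC _ _).2 _; rewrite mulrAC; apply: ler_wpM2r => //.
by rewrite ler_pM2l //; apply: le_trans (D_le _) _; rewrite ler_pM2l.
Qed.

End CentralCompression.

Lemma approx_inner_of_central_bai (K : numFieldType) (A : completeNormedModType K)
    (mul : A -> A -> A) :
  has_central_bai mul ->
  forall (X : completeNormedModType K) (lact : A -> X -> X)
         (ract : X -> A -> X) (D : A -> X),
    banach_bimodule mul lact ract ->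
    derivation mul lact ract D -> continuous D ->
    approx_semi_inner lact ract D -> approx_inner lact ract D.
Proof.
move=> [J [le [e [dJ [e_central [[M e_le_M] e_unit]]]]]] X lact ract D.
move=> bimod D_der D_cont D_semi.
have FF := net_filter_proper dJ.
apply/approx_inner_of_fin/(fin_approx_inner_lim (G := net_filter le)
  (Dj := fun j a => compress lact ract (e j) (D a))) => [j|].
  apply: (compress_fin_approx_inner bimod (e_central j) D_der D_semi).
apply: (compress_central_bai_cvg bimod D_der D_cont dJ e_central e_le_M e_unit).
Qed.

Lemma unital_central_bai (K : numFieldType) (A : completeNormedModType K)
    (mul : A -> A -> A) :
  unital mul -> has_central_bai mul.
Proof.
move=> [u u_unit]; exists unit, (fun _ _ => True), (fun _ => u).
split; first by split; [exact: inhabits tt | split=> //; split=> // _ _; exists tt].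
split; first by move=> _ a; case: (u_unit a) => -> ->.
split; first by exists `|u|.
by move=> a eps eps0; exists tt => _ _; case: (u_unit a) => -> _; rewrite subrr normr0.
Qed.

Theorem proposition2p4 (K : numFieldType) (A : completeNormedModType K)
  (mul : A -> A -> A) :
  banach_algebra mul ->
  (has_central_bai mul ->
     forall (X : completeNormedModType K) (lact : A -> X -> X)
            (ract : X -> A -> X) (D : A -> X),
       banach_bimodule mul lact ract ->
       derivation mul lact ract D -> continuous D ->
       approx_semi_inner lact ract D -> approx_inner lact ract D)
  /\
  (unital mul ->
     forall (X : completeNormedModType K) (lact : A -> X -> X)
            (ract : X -> A -> X) (D : A -> X),
       banach_bimodule mul lact ract ->
       derivation mul lact ract D -> continuous D ->
       approx_semi_inner lact ract D -> approx_inner lact ract D).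
Proof.
move=> _; split=> [|/unital_central_bai]; exact: approx_inner_of_central_bai.
Qed.
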